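(* Under the setting of the context, the function $v(i,y)=\sum_{n\ge0}\sum_{j\in E}P^n(i,j)g(j,y)$ is well defined, bounded by $\Gamma(1-c)^{-1}$, and twice continuously differentiable in $y$ with bounded derivatives. In particular, $v$ is Lipschitz continuous in $y$, uniformly in $i\in E$.
   Context: Let $d\ge1$, $(e_1,\dots,e_d)$ the canonical basis of $\mathbb R^d$, $\mathcal V=\{\pm e_1,\dots,\pm e_d\}$. Let $E$ be a finite set and $P$ an irreducible and aperiodic stochastic matrix on $E$ with unique invariant probability $\mu$; let $\Gamma>0$ and $c\in(0,1)$ be constants such that $\sum_{j\in E}|P^n(i,j)-\mu(j)|\le\Gamma c^n$ for all $n\ge0$, $i\in E$. For each $k\in E$, $y\in\mathbb R^d$, $p(k,y,\cdot)$ is a probability on $\mathcal V$, with $y\mapsto p(k,y,u)$ twice continuously differentiable with bounded derivatives. Let $g(k,y)=\sum_{u\in\mathcal V}u\,p(k,y,u)$ and assume $\sum_k\mu(k)g(k,y)=0$ for all $y\in\mathbb R^d$. *)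

From HB Require Import structures.
From mathcomp Require Import all_boot all_order all_algebra.
From mathcomp Require Import all_classical all_reals all_analysis.
Set Implicit Arguments. Unset Strict Implicit. Unset Printing Implicit Defensive.
Import Order.TTheory GRing.Theory Num.Theory.
Import numFieldNormedType.Exports.
Local Open Scope ring_scope.

Section Defs.
Variable R : realType.

Definition basisv (d : nat) (a : 'I_d) : 'rV[R]_d := delta_mx 0 a.

(* The set V = {+-e_1,...,+-e_d} is indexed by 'I_d * bool:
   (a, true) |-> e_a, (a, false) |-> - e_a. *)
Definition dirvec (d : nat) (u : 'I_d * bool) : 'rV[R]_d :=
  (if u.2 then 1 else -1) *: basisv u.1.

Definition partial (d : nat) (a : 'I_d) (f : 'rV[R]_d -> R) : 'rV[R]_d -> R :=
  fun y => 'D_(basisv a) f y.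

Definition C2_bounded (d : nat) (f : 'rV[R]_d -> R) : Prop :=
  [/\ (forall y, differentiable f y),
      (forall a y, differentiable (partial a f) y),
      (forall a b, continuous (partial b (partial a f))),
      (exists M : R, forall a y, `|partial a f y| <= M) &
      (exists M : R, forall a b y, `|partial b (partial a f) y| <= M)].

Definition stochastic (N : nat) (P : 'M[R]_N) : Prop :=
  (forall i j, 0 <= P i j) /\ (forall i, \sum_j P i j = 1).

Definition irreducible (N : nat) (P : 'M[R]_N) : Prop :=
  forall i j, exists n : nat, 0 < (P ^+ n) i j.

(* the period of each state (gcd of its return times) equals 1 *)
Definition aperiodic (N : nat) (P : 'M[R]_N) : Prop :=
  forall i m : nat, forall Hi : (i < N)%N,
    (forall n : nat, (0 < n)%N -> 0 < (P ^+ n) (Ordinal Hi) (Ordinal Hi) ->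
       (m %| n)%N) -> m = 1%N.

Definition invariant_prob (N : nat) (P : 'M[R]_N) (mu : 'I_N -> R) : Prop :=
  [/\ (forall j, 0 <= mu j), \sum_j mu j = 1 &
      forall j, \sum_i mu i * P i j = mu j].

Definition drift (d N : nat) (p : 'I_N -> 'rV[R]_d -> 'I_d * bool -> R)
  (k : 'I_N) (y : 'rV[R]_d) : 'rV[R]_d :=
  \sum_(u : 'I_d * bool) p k y u *: dirvec u.

Definition vterm (d N : nat) (P : 'M[R]_N)
  (p : 'I_N -> 'rV[R]_d -> 'I_d * bool -> R) (i : 'I_N) (y : 'rV[R]_d)
  (n : nat) : 'rV[R]_d :=
  \sum_j (P ^+ n) i j *: drift p j y.

Definition vsol (d N : nat) (P : 'M[R]_N)
  (p : 'I_N -> 'rV[R]_d -> 'I_d * bool -> R) (i : 'I_N) (y : 'rV[R]_d)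
  : 'rV[R]_d :=
  limn (series (vterm P p i y)).

End Defs.

From HB Require Import structures.
From mathcomp Require Import all_boot all_order all_algebra.
From mathcomp Require Import all_classical all_reals all_analysis.
Import Order.TTheory GRing.Theory Num.Theory.
Import numFieldNormedType.Exports.
Set Implicit Arguments. Unset Strict Implicit. Unset Printing Implicit Defensive.
Local Open Scope ring_scope.

(* Subtracting the centring identity \sum_k mu(k) g(k,y) = 0, the n-th term of
   the series becomes \sum_j (P^n(i,j) - mu(j)) g(j,y), of norm at most Gamma c^n
   since |g| <= 1; hence the series converges and |v| <= Gamma / (1 - c).
   Summing over n first gives v(i,y) = \sum_j Z(i,j) g(j,y) with the deviation
   matrix Z(i,j) = \sum_n (P^n(i,j) - mu(j)), which does not depend on y, so each
   coordinate of v(i,.) is a fixed finite linear combination of the p(k,.,u) and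
   inherits their bounded C^2 regularity.  Bounded first partial derivatives give
   the Lipschitz bound by the mean value theorem along coordinate directions. *)

Section C2_bounded_closure.
Variables (R : realType) (d : nat).
Implicit Types (f g : 'rV[R]_d -> R) (k : R).

Lemma partialD f g a :
  (forall y, differentiable f y) -> (forall y, differentiable g y) ->
  partial a (f + g) = partial a f + partial a g.
Proof.
move=> df dg; apply/funext => y.
by rewrite /partial deriveD //; apply: diff_derivable.
Qed.

Lemma partialZ f k a : (forall y, differentiable f y) ->
  partial a (k \*: f) = k \*: partial a f.
Proof.
move=> df; apply/funext => y.
exact: (deriveZ k (diff_derivable (v := basisv R a) (df y))).
Qed.

Lemma C2_bounded0 : C2_bounded (cst 0 : 'rV[R]_d -> R).
Proof.
have partial0 a : partial a (cst 0 : 'rV[R]_d -> R) = cst 0.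
  by apply/funext => y; rewrite /partial derive_cst.
split=> [y|a y|a b||]; rewrite ?partial0 //; first exact: cst_continuous.
- by exists 0 => a y; rewrite partial0 normr0.
- by exists 0 => a b y; rewrite !partial0 normr0.
Qed.

Lemma C2_boundedD f g : C2_bounded f -> C2_bounded g -> C2_bounded (f + g).
Proof.
move=> [df ddf cf [M1 hM1] [M2 hM2]] [dg ddg cg [N1 hN1] [N2 hN2]].
have pD a : partial a (f + g) = partial a f + partial a g by exact: partialD.
have ppD a b : partial b (partial a (f + g)) =
    partial b (partial a f) + partial b (partial a g).
  by rewrite pD partialD.
split=> [y|a y|a b||].
- exact: differentiableD.
- by rewrite pD; apply: differentiableD.
- by rewrite ppD => y; apply: continuousD; [exact: cf | exact: cg].
- exists (M1 + N1) => a y; rewrite pD.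
  by apply: le_trans (ler_normD _ _) _; apply: lerD.
- exists (M2 + N2) => a b y; rewrite ppD.
  by apply: le_trans (ler_normD _ _) _; apply: lerD.
Qed.

Lemma C2_boundedZ k f : C2_bounded f -> C2_bounded (k \*: f).
Proof.
move=> [df ddf cf [M1 hM1] [M2 hM2]].
have pZ a : partial a (k \*: f) = k \*: partial a f by exact: partialZ.
have ppZ a b : partial b (partial a (k \*: f)) = k \*: partial b (partial a f).
  by rewrite pZ partialZ //; exact: ddf.
have scaleE (h : 'rV[R]_d -> R) : k \*: h = k *: h by [].
split=> [y|a y|a b||].
- by rewrite scaleE; apply: differentiableZ.
- by rewrite pZ scaleE; apply: differentiableZ.
- rewrite ppZ => y.
  by apply: (continuousM (s := cst k)); [exact: cst_continuous | exact: cf].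
- exists (`|k| * M1) => a y; rewrite pZ /= normrM.
  exact: ler_wpM2l.
- exists (`|k| * M2) => a b y; rewrite ppZ /= normrM.
  exact: ler_wpM2l.
Qed.

Lemma C2_bounded_lincomb (I : Type) (r : seq I) (w : I -> R)
    (F : I -> 'rV[R]_d -> R) :
  (forall i, C2_bounded (F i)) ->
  C2_bounded (fun y => \sum_(i <- r) w i * F i y).
Proof.
move=> hF; elim: r => [|i r IH].
  by under eq_fun do rewrite big_nil; exact: C2_bounded0.
under eq_fun do rewrite big_cons.
exact: C2_boundedD (C2_boundedZ _ (hF i)) IH.
Qed.

End C2_bounded_closure.

Section Lipschitz.
Local Open Scope classical_set_scope.
Variable R : realType.

Lemma mx_entry_le_norm (m n : nat) (A : 'M[R]_(m, n)) i j : `|A i j| <= `|A|.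
Proof.
rewrite [leRHS]/Num.Def.normr /= mx_normrE.
exact: le_trans (le_bigmax _ _ (i, j)).
Qed.

Lemma mx_norm_le_entrywise (m n : nat) (A : 'M[R]_(m, n)) e :
  0 <= e -> (forall i j, `|A i j| <= e) -> `|A| <= e.
Proof.
move=> e0 hA; rewrite [leLHS]/Num.Def.normr /= mx_normrE.
by apply: bigmax_le => // -[i j] _; exact: hA.
Qed.

Lemma is_derive_along_line (V : normedModType R) (f : V -> R) (e w : V) t :
  differentiable f (t *: e + w) ->
  is_derive t 1 (fun s : R => f (s *: e + w)) ('D_e f (t *: e + w)).
Proof.
move=> df.
have quotientE : (fun h : R => h^-1 *: (f ((h *: 1 + t) *: e + w) - f (t *: e + w))) =
    (fun h : R => h^-1 *: (f (h *: e + (t *: e + w)) - f (t *: e + w))).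
  apply/funext => h; rewrite scalerDl addrA.
  by congr (_ *: (f (_ + _ + _) - _)); rewrite /GRing.scale /= mulr1.
apply: DeriveDef; rewrite /derivable /derive /= quotientE //.
exact: diff_derivable.
Qed.

Lemma lipschitz_rV_of_entries (V : normedModType R) (I : finType) (n : nat)
    (f : I -> V -> 'rV[R]_n) :
  (forall i a, exists L : R, forall y z, `|f i y 0 a - f i z 0 a| <= L * `|y - z|) ->
  exists L : R, forall i y z, `|f i y - f i z| <= L * `|y - z|.
Proof.
move=> hf; have [L hfL] := choice (fun ia : I * 'I_n => hf ia.1 ia.2).
exists (\sum_ia `|L ia|) => i y z.
apply: mx_norm_le_entrywise => [|i0 a]; first by rewrite mulr_ge0 ?sumr_ge0.
rewrite (ord1 i0) !mxE; apply: le_trans (hfL (i, a) y z) _.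
apply: ler_wpM2r => //; apply: le_trans (ler_norm _) _.
by rewrite (bigD1 (i, a)) //= lerDl sumr_ge0.
Qed.

Variable d : nat.
Implicit Types (f : 'rV[R]_d -> R) (M : R).

Lemma lipschitz_along_basisv f a M :
  (forall y, differentiable f y) -> (forall y, `|partial a f y| <= M) ->
  forall w s, `|f (s *: basisv R a + w) - f w| <= M * `|s|.
Proof.
move=> df hM w s.
pose g s := f (s *: basisv R a + w).
have dg (t : R) : is_derive t 1 g (partial a f (t *: basisv R a + w)).
  exact: is_derive_along_line.
have cg (i : interval R) : {within [set` i], continuous g}.
  apply: derivable_within_continuous => t _.
  by have [] := dg t.
have -> : f w = g 0 by rewrite /g scale0r add0r.
have [s0|s0] := leP 0 s.
  have [t _ ->] := MVT_segment s0 (fun t _ => dg t) (cg _).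
  by rewrite normrM subr0 ler_wpM2r.
have [t _ gE] := MVT_segment (ltW s0) (fun t _ => dg t) (cg _).
by rewrite distrC gE normrM sub0r normrN ler_wpM2r.
Qed.

Lemma lipschitz_of_bounded_partials f M :
  (forall y, differentiable f y) -> (forall a y, `|partial a f y| <= M) ->
  forall y z, `|f y - f z| <= d%:R * M * `|y - z|.
Proof.
move=> df hM y z.
pose w k : 'rV[R]_d := \row_b (if (b < k)%N then y 0 b else z 0 b).
have wS (k : 'I_d) : w k.+1 = (y 0 k - z 0 k) *: basisv R k + w k.
  apply/rowP => b; rewrite !mxE /=.
  have [bk|bk|/val_inj->] := ltngtP b k.
  - by rewrite ltnS (ltnW bk) -val_eqE /= (ltn_eqF bk) mulr0 add0r.
  - by rewrite ltnS leqNgt bk -val_eqE /= (gtn_eqF bk) mulr0 add0r.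
  - by rewrite ltnSn eqxx mulr1 subrK.
have w0 : w 0%N = z by apply/rowP => b; rewrite !mxE.
have wd : w d = y by apply/rowP => b; rewrite !mxE ltn_ord.
have -> : f y - f z = \sum_(k < d) (f (w k.+1) - f (w k)).
  by rewrite -wd -w0 -(telescope_sumr (fun k => f (w k)) (leq0n d)) big_mkord.
apply: le_trans (ler_norm_sum _ _ _) _.
have -> : d%:R * M * `|y - z| = \sum_(k < d) M * `|y - z|.
  by rewrite sumr_const card_ord -mulrA mulr_natl.
apply: ler_sum => k _; rewrite wS.
apply: le_trans (lipschitz_along_basisv df (hM k) _ _) _.
apply: ler_wpM2l; first exact: le_trans (normr_ge0 _) (hM k y).
have -> : y 0 k - z 0 k = (y - z) 0 k by rewrite !mxE.
exact: mx_entry_le_norm.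
Qed.

End Lipschitz.

Section geometric_domination.
Variables (R : realType) (a z : R).
Hypotheses (z_gt0 : 0 < z) (z_lt1 : z < 1).

Lemma series_norm_le_geometric (V : normedModType R) (u : V ^nat) :
  (forall n, `|u n| <= geometric a z n) -> forall n, `|series u n| <= a / (1 - z).
Proof.
move=> hu n.
have a_ge0 : 0 <= a.
  by have := le_trans (normr_ge0 _) (hu 0%N); rewrite /= expr0 mulr1.
rewrite seriesEord; apply: le_trans (ler_norm_sum _ _ _) _.
apply: le_trans (geometric_le_lim n a_ge0 z_gt0 _); last by rewrite gtr0_norm.
by rewrite seriesEord; apply: ler_sum.
Qed.

Lemma lim_series_norm_le_geometric (V : normedModType R) (u : V ^nat) :
  cvgn (series u) -> (forall n, `|u n| <= geometric a z n) ->
  `|limn (series u)| <= a / (1 - z).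
Proof.
move=> cu hu; rewrite -lim_norm //; apply: limr_le; first exact: is_cvg_norm.
exact: nearW (series_norm_le_geometric hu).
Qed.

Lemma is_cvg_series_le_geometric (V : completeNormedModType R) (u : V ^nat) :
  (forall n, `|u n| <= geometric a z n) -> cvgn (series u).
Proof.
move=> hu; apply: normed_cvg; apply: (series_le_cvg (v_ := geometric a z)) => //.
- by move=> n /=.
- by move=> n; exact: le_trans (normr_ge0 _) (hu n).
- by apply: is_cvg_geometric_series; rewrite gtr0_norm.
Qed.

End geometric_domination.

Lemma dirvec_norm_le1 (R : realType) (d : nat) (u : 'I_d * bool) :
  `|dirvec R u| <= 1.
Proof.
rewrite /dirvec mx_normZ.
have -> : `|(if u.2 then 1 else -1 : R)| = 1 by case: u.2; rewrite ?normrN normr1.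
rewrite mul1r; apply: mx_norm_le_entrywise => // i j; rewrite /basisv mxE.
by case: (_ && _); rewrite ?normr1 ?normr0.
Qed.

Section deviation_expansion.
Local Open Scope classical_set_scope.
Variables (R : realType) (d N : nat) (P : 'M[R]_N) (mu : 'I_N -> R).
Variables (Gamma c : R) (p : 'I_N -> 'rV[R]_d -> 'I_d * bool -> R).
Hypotheses (c_gt0 : 0 < c) (c_lt1 : c < 1).
Hypothesis mixing : forall n i, \sum_j `|(P ^+ n) i j - mu j| <= Gamma * c ^+ n.
Hypothesis p_ge0 : forall k y u, 0 <= p k y u.
Hypothesis p_sum1 : forall k y, \sum_u p k y u = 1.
Hypothesis p_C2 : forall k u, C2_bounded (fun y => p k y u).
Hypothesis drift_centered : forall y, \sum_k mu k *: drift p k y = 0.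

Definition deviation i j := limn (series (fun n => (P ^+ n) i j - mu j)).

Lemma deviation_term_le i j n : `|(P ^+ n) i j - mu j| <= geometric Gamma c n.
Proof.
apply: le_trans (mixing n i); rewrite (bigD1 j) //= lerDl.
exact: sumr_ge0.
Qed.

Lemma is_cvg_deviation i j : cvgn (series (fun n => (P ^+ n) i j - mu j)).
Proof. exact: (is_cvg_series_le_geometric (V := R) c_gt0 c_lt1 (deviation_term_le i j)). Qed.

Lemma drift_norm_le1 k y : `|drift p k y| <= 1.
Proof.
apply: le_trans (ler_norm_sum _ _ _) _; rewrite -(p_sum1 k y).
apply: ler_sum => u _; rewrite normrZ ger0_norm //.
by rewrite ler_piMr // dirvec_norm_le1.
Qed.

Lemma vterm_centered i y n :
  vterm P p i y n = \sum_j ((P ^+ n) i j - mu j) *: drift p j y.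
Proof.
under [RHS]eq_bigr do rewrite scalerBl.
by rewrite sumrB drift_centered subr0.
Qed.

Lemma vterm_norm_le i y n : `|vterm P p i y n| <= geometric Gamma c n.
Proof.
rewrite vterm_centered; apply: le_trans (ler_norm_sum _ _ _) _.
apply: le_trans (mixing n i); apply: ler_sum => j _.
by rewrite normrZ ler_piMr // drift_norm_le1.
Qed.

Lemma vterm_series_cvg i y :
  series (vterm P p i y) @ \oo --> \sum_j deviation i j *: drift p j y.
Proof.
have -> : series (vterm P p i y) =
    (fun n => \sum_j series (fun m => (P ^+ m) i j - mu j) n *: drift p j y).
  apply/funext => n; rewrite seriesEord /=.
  under eq_bigr do rewrite vterm_centered.
  rewrite exchange_big /=; apply: eq_bigr => j _.
  by rewrite seriesEord /= scaler_suml.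
apply: cvg_big => [|j _]; first exact: add_continuous.
by apply: cvgZ (cvg_cst _); exact: is_cvg_deviation.
Qed.

Lemma vsolE i y : vsol P p i y = \sum_j deviation i j *: drift p j y.
Proof. exact/cvg_lim/vterm_series_cvg. Qed.

Lemma C2_bounded_vsol_entry i a : C2_bounded (fun y => vsol P p i y 0 a).
Proof.
have -> : (fun y => vsol P p i y 0 a) = (fun y =>
    \sum_j deviation i j * \sum_u dirvec R u 0 a * p j y u).
  apply/funext => y; rewrite vsolE summxE; apply: eq_bigr => j _.
  rewrite mxE /drift summxE; congr (_ * _); apply: eq_bigr => u _.
  by rewrite mxE mulrC.
apply: C2_bounded_lincomb => j.
exact: C2_bounded_lincomb.
Qed.

End deviation_expansion.

Theorem lemma4p2 (R : realType) (d N : nat) (hd : (1 <= d)%N)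
  (P : 'M[R]_N) (mu : 'I_N -> R) (Gamma c : R)
  (p : 'I_N -> 'rV[R]_d -> 'I_d * bool -> R)
  (hP : stochastic P) (hirr : irreducible P) (haper : aperiodic P)
  (hmu : invariant_prob P mu)
  (hmu_uniq : forall nu, invariant_prob P nu -> nu =1 mu)
  (hGamma : 0 < Gamma) (hc0 : 0 < c) (hc1 : c < 1)
  (hmix : forall (n : nat) (i : 'I_N),
      \sum_j `|(P ^+ n) i j - mu j| <= Gamma * c ^+ n)
  (hp0 : forall k y u, 0 <= p k y u)
  (hp1 : forall k y, \sum_u p k y u = 1)
  (hpC2 : forall k u, C2_bounded (fun y => p k y u))
  (hcenter : forall y, \sum_k mu k *: drift p k y = 0) :
  [/\ (forall i y, cvgn (series (vterm P p i y))),
      (forall i y, `|vsol P p i y| <= Gamma / (1 - c)),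
      (forall i (a : 'I_d), C2_bounded (fun y => vsol P p i y 0 a)) &
      (exists L : R, forall i y z, `|vsol P p i y - vsol P p i z| <= L * `|y - z|)].
Proof.
have series_cvg (i : 'I_N) (y : 'rV[R]_d) : cvgn (series (vterm P p i y)).
  by apply: cvgP; exact: (vterm_series_cvg hc0 hc1 hmix hcenter).
have C2_entry i a : C2_bounded (fun y => vsol P p i y 0 a).
  exact: (C2_bounded_vsol_entry hc0 hc1 hmix hpC2 hcenter).
split => //.
- move=> i y; apply: (lim_series_norm_le_geometric hc0 hc1 (series_cvg i y)).
  exact: (vterm_norm_le hmix hp0 hp1 hcenter).
- apply: lipschitz_rV_of_entries => i a.
  have [df _ _ [M hM] _] := C2_entry i a.
  by exists (d%:R * M); exact: lipschitz_of_bounded_partials.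
Qed.
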